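(* Let $p$ be an odd prime. Then \[ \sum_{j=0}^{p}E_j\equiv\frac32\pmod p . \]
   Context: The Euler polynomials are defined by $\sum_{n\ge0}E_n(x)\frac{t^n}{n!}=\frac{2}{e^t+1}e^{xt}$, and $E_n:=E_n(0)$ (so $E_0=1$, $E_1=-1/2$, $E_{2m}=0$ for $m\ge1$). For rationals whose denominators are coprime to $p$, $a\equiv b\pmod p$ means $a-b$ is $p$ times a rational with denominator coprime to $p$. *)

From mathcomp Require Import all_boot all_order all_algebra.
Set Implicit Arguments. Unset Strict Implicit. Unset Printing Implicit Defensive.
Import Order.TTheory GRing.Theory Num.Theory.
Local Open Scope ring_scope.

(* Euler numbers E_n = E_n(0), where sum_n E_n(x) t^n/n! = 2 e^{xt}/(e^t+1).
   Comparing coefficients of t^n in (e^t + 1) * sum_n E_n t^n/n! = 2 gives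
     sum_{k=0}^{n} C(n,k) E_k + E_n = 2 [n = 0],
   i.e. E_0 = 1 and E_n = -1/2 * sum_{k<n} C(n,k) E_k for n >= 1.
   [euler_list n] is the list [:: E_0; ...; E_n]. *)
Fixpoint euler_list (n : nat) : seq rat :=
  match n with
  | 0 => [:: 1]
  | n'.+1 =>
      let s := euler_list n' in
      rcons s (- (1 / 2) * \sum_(k < n'.+1) 'C(n'.+1, k)%:R * nth 0 s k)
  end.

Definition euler (n : nat) : rat := nth 0 (euler_list n) n.

Definition rat_congr (p : nat) (a b : rat) : Prop :=
  exists c : rat, a - b = p%:R * c /\ coprime `|denq c|%N p.

(* Write q = p - 1. All E_k are p-integral (their denominators are powers of
   2), and for k < p we have (-1)^k C(q,k) == 1 and C(p,k) == [k = 0] mod p.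
   Hence sum_(k<p) E_k == sum_(k<=q) (-1)^k C(q,k) E_k = 2 - E_q = 2, by the
   reflection formula E_n(-1) + E_n = 2(-1)^n and E_q = 0 for the even q > 0;
   and the defining recurrence -2 E_p = sum_(k<p) C(p,k) E_k == E_0 = 1 gives
   E_p == -1/2 mod p. *)

From HB Require Import structures.
From mathcomp Require Import all_boot all_order all_algebra.
From mathcomp Require Import ring lra zify.
Import Order.TTheory GRing.Theory Num.Theory.
Local Open Scope ring_scope.

Lemma bin_mul_bin n k j : (j <= k <= n)%N ->
  ('C(n, k) * 'C(k, j) = 'C(n, j) * 'C(n - j, k - j))%N.
Proof.
case/andP=> le_jk le_kn; have le_jn := leq_trans le_jk le_kn.
have nkE : (n - j - (k - j) = n - k)%N by lia.
have facts_gt0 : (0 < j`! * (k - j)`! * (n - k)`!)%N by rewrite !muln_gt0 !fact_gt0.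
apply/eqP; rewrite -(eqn_pmul2r facts_gt0).
apply/eqP; transitivity n`!.
  by rewrite -(bin_fact le_kn) -(bin_fact le_jk); ring.
by rewrite -(bin_fact le_jn) -(bin_fact (leq_sub2r j le_kn)) nkE; ring.
Qed.

Section BinomialInversion.

Variable R : comPzRingType.

Lemma sum_alt_binomial m :
  \sum_(i < m.+1) (-1) ^+ i * 'C(m, i)%:R = (m == 0%N)%:R :> R.
Proof.
have := exprBn (1 : R) 1 m; rewrite subrr expr0n => ->.
by apply: eq_bigr => i _; rewrite !expr1n !mulr1 mulr_natr.
Qed.

Lemma sum_alt_bin_mul_bin n j : (j <= n)%N ->
  \sum_(k < n.+1) (-1) ^+ (k + j) * ('C(n, k) * 'C(k, j))%:R = (j == n)%:R :> R.
Proof.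
move=> le_jn; have nE : n.+1 = (j + (n - j).+1)%N by lia.
rewrite nE big_split_ord /= big1 ?add0r => [|k _]; last first.
  by rewrite (bin_small (ltn_ord k)) muln0 mulr0.
transitivity ('C(n, j)%:R * \sum_(i < (n - j).+1) (-1) ^+ i * 'C(n - j, i)%:R : R).
  rewrite mulr_sumr; apply: eq_bigr => i _.
  rewrite bin_mul_bin ?leq_addr //=; last by have := ltn_ord i; lia.
  rewrite addKn addnAC addnn -signr_odd oddD odd_double /= signr_odd natrM.
  by rewrite mulrCA mulrA.
rewrite sum_alt_binomial subn_eq0 eqn_leq le_jn /=.
case: leqP => [le_nj | _]; last by rewrite mulr0.
by rewrite (@anti_leq j n) ?le_jn ?le_nj // binn mulr1.
Qed.

Lemma binomial_inversion (a : nat -> R) n :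
  \sum_(k < n.+1) (-1) ^+ k * 'C(n, k)%:R *
    \sum_(j < k.+1) (-1) ^+ j * 'C(k, j)%:R * a j = a n.
Proof.
transitivity (\sum_(j < n.+1) \sum_(k < n.+1)
    (-1) ^+ (k + j) * ('C(n, k) * 'C(k, j))%:R * a j).
  rewrite exchange_big /=; apply: eq_bigr => k _.
  rewrite (big_ord_widen n.+1 (fun j => (-1) ^+ j * 'C(k, j)%:R * a j)) ?ltn_ord //.
  rewrite big_mkcond mulr_sumr; apply: eq_bigr => j _.
  case: ltnP => [_ | lt_kj]; first by rewrite exprD natrM; ring.
  by rewrite (bin_small lt_kj) muln0 !(mulr0, mul0r).
rewrite big_ord_recr /= -big_distrl /= sum_alt_bin_mul_bin // eqxx mul1r.
rewrite big1 ?add0r // => j _.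
by rewrite -big_distrl /= sum_alt_bin_mul_bin ?ltn_eqF ?mul0r // ltnW.
Qed.

End BinomialInversion.

Definition p_integral (p : nat) : {pred rat} := fun x => coprime `|denq x| p.

Lemma p_integralP p x :
  reflect (exists2 d : nat, coprime d p & x * d%:R \is a Num.int)
          (x \in p_integral p).
Proof.
apply: (iffP idP) => [x_int | [d d_p /intrP [z xdE]]].
  by exists `|denq x|%N => //; rewrite pmulrn absz_denq -numqE intr_int.
have numE : (numq x * d%:Z = z * denq x)%R.
  by apply: (@intr_inj rat); rewrite !rmorphM /= numqE -xdE; ring.
have den_dvd : (`|denq x| %| d)%N.
  rewrite -(@Gauss_dvdr _ `|numq x|); last by rewrite coprime_sym coprime_num_den.
  by rewrite -[d]absz_nat -abszM numE abszM dvdn_mull.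
exact: coprime_dvdl den_dvd d_p.
Qed.

Fact p_integral_subring p : subring_closed (p_integral p).
Proof.
split; first by rewrite unfold_in /= coprime1n.
- move=> u v /p_integralP [du du_p u_int] /p_integralP [dv dv_p v_int].
  apply/p_integralP; exists (du * dv)%N; first by rewrite coprimeMl du_p.
  have -> : (u - v) * (du * dv)%N%:R = u * du%:R * dv%:R - v * dv%:R * du%:R.
    by rewrite natrM; ring.
  by rewrite rpredB // rpredM // rpred_nat.
- move=> u v /p_integralP [du du_p u_int] /p_integralP [dv dv_p v_int].
  apply/p_integralP; exists (du * dv)%N; first by rewrite coprimeMl du_p.
  have -> : u * v * (du * dv)%N%:R = u * du%:R * (v * dv%:R).
    by rewrite natrM; ring.
  by rewrite rpredM.
Qed.

HB.instance Definition _ p :=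
  GRing.isSubringClosed.Build rat (p_integral p) (p_integral_subring p).

Lemma half_p_integral p : odd p -> 1 / 2 \in p_integral p.
Proof.
move=> p_odd; apply/p_integralP; exists 2%N; first by rewrite coprime2n.
by rewrite mul1r mulVf.
Qed.

Section RatCongr.

Variable p : nat.

Lemma rat_congrP a b :
  rat_congr p a b <-> exists2 c, c \in p_integral p & a - b = p%:R * c.
Proof. by split=> [[c [? ?]] | [c ? ?]]; exists c. Qed.

Lemma rat_congr_refl a : rat_congr p a a.
Proof. by apply/rat_congrP; exists 0; rewrite ?rpred0 // subrr mulr0. Qed.

Lemma rat_congr_sym a b : rat_congr p a b -> rat_congr p b a.
Proof.
move=> /rat_congrP [x x_int abE].
by apply/rat_congrP; exists (- x); rewrite ?rpredN // mulrN -abE opprB.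
Qed.

Lemma rat_congrD a b c d :
  rat_congr p a b -> rat_congr p c d -> rat_congr p (a + c) (b + d).
Proof.
move=> /rat_congrP [x x_int abE] /rat_congrP [y y_int cdE].
apply/rat_congrP; exists (x + y); first exact: rpredD.
by rewrite mulrDr -abE -cdE addrACA opprD.
Qed.

Lemma rat_congr_trans a b c :
  rat_congr p a b -> rat_congr p b c -> rat_congr p a c.
Proof.
move=> /rat_congrP [x x_int abE] /rat_congrP [y y_int bcE].
apply/rat_congrP; exists (x + y); first exact: rpredD.
by rewrite mulrDr -abE -bcE addrA subrK.
Qed.

Lemma rat_congrMl c a b : c \in p_integral p ->
  rat_congr p a b -> rat_congr p (c * a) (c * b).
Proof.
move=> c_int /rat_congrP [x x_int abE].
by apply/rat_congrP; exists (c * x); rewrite ?rpredM // mulrCA -abE mulrBr.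
Qed.

Lemma rat_congrMr c a b : c \in p_integral p ->
  rat_congr p a b -> rat_congr p (a * c) (b * c).
Proof. by rewrite ![_ * c]mulrC; apply: rat_congrMl. Qed.

Lemma rat_congr_sum (I : Type) (r : seq I) (P : pred I) (F G : I -> rat) :
  (forall i, P i -> rat_congr p (F i) (G i)) ->
  rat_congr p (\sum_(i <- r | P i) F i) (\sum_(i <- r | P i) G i).
Proof.
by move=> FG; apply: big_ind2 => //; [exact: rat_congr_refl | exact: rat_congrD].
Qed.

Lemma rat_congr_dvdn n : (p %| n)%N -> rat_congr p n%:R 0.
Proof.
move=> /divnK nE; apply/rat_congrP; exists (n %/ p)%:R; first exact: rpred_nat.
by rewrite subr0 -natrM mulnC nE.
Qed.

End RatCongr.

Lemma size_euler_list n : size (euler_list n) = n.+1.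
Proof. by elim: n => //= n IHn; rewrite size_rcons IHn. Qed.

Lemma nth_euler_list n k : (k <= n)%N -> nth 0 (euler_list n) k = euler k.
Proof.
elim: n => [|n IHn]; first by rewrite leqn0 => /eqP ->.
rewrite leq_eqVlt => /predU1P [-> // | lt_kn].
by rewrite /= nth_rcons size_euler_list lt_kn IHn.
Qed.

Lemma euler0 : euler 0 = 1.
Proof. by []. Qed.

Lemma eulerS n :
  euler n.+1 = - (1 / 2) * \sum_(k < n.+1) 'C(n.+1, k)%:R * euler k.
Proof.
rewrite /euler /= nth_rcons size_euler_list ltnn eqxx; congr (_ * _).
by apply: eq_bigr => k _; rewrite nth_euler_list // -ltnS.
Qed.

Lemma sum_binomial_euler n :
  \sum_(k < n.+1) 'C(n, k)%:R * euler k = 2 * (n == 0%N)%:R - euler n.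
Proof.
case: n => [|n]; first by rewrite big_ord1 euler0.
by rewrite big_ord_recr /= binn eulerS; field.
Qed.

(* The reflection formula E_n(-1) + E_n(0) = 2 (-1)^n, multiplied by (-1)^n. *)
Lemma sum_alt_binomial_euler n :
  \sum_(k < n.+1) (-1) ^+ k * 'C(n, k)%:R * euler k = 2 - (-1) ^+ n * euler n.
Proof.
have inner k : \sum_(j < k.+1) (-1) ^+ j * 'C(k, j)%:R * ((-1) ^+ j * euler j)
    = 2 * (k == 0%N)%:R - euler k.
  by rewrite -sum_binomial_euler; apply: eq_bigr => j _; rewrite mulrAC signrMK mulrC.
have := binomial_inversion _ (fun j => (-1) ^+ j * euler j) n.
under eq_bigr do rewrite inner mulrBr.
rewrite sumrB big_ord_recl big1 => [<- /= | k _]; last by rewrite mulr0.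
by rewrite expr0 bin0 !mul1r; ring.
Qed.

(* g(t) + g(-t) = 2 for g(t) = 2 / (e^t + 1); so E_n = 0 for even n > 0. *)
Lemma euler_sign n : (-1) ^+ n * euler n = 2 * (n == 0%N)%:R - euler n.
Proof.
elim/ltn_ind: n => -[|n] IHn; first by rewrite euler0 /=; ring.
have alt_sumE : \sum_(k < n.+1) (-1) ^+ k * 'C(n.+1, k)%:R * euler k
    = 2 - \sum_(k < n.+1) 'C(n.+1, k)%:R * euler k.
  transitivity (\sum_(k < n.+1) 'C(n.+1, k)%:R * (2 * (k == 0%N :> nat)%:R - euler k)).
    by apply: eq_bigr => k _; rewrite -(IHn k (ltn_ord k)); ring.
  under eq_bigr do rewrite mulrBr.
  rewrite sumrB big_ord_recl big1 => [|k _]; last by rewrite mulr0.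
  by rewrite bin0 mul1r addr0.
have := sum_alt_binomial_euler n.+1; rewrite big_ord_recr /= alt_sumE binn.
have := sum_binomial_euler n.+1; rewrite big_ord_recr /= binn.
lra.
Qed.

Lemma euler_p_integral p n : odd p -> euler n \in p_integral p.
Proof.
move=> p_odd; elim/ltn_ind: n => -[|n] IHn; first by rewrite euler0 rpred1.
rewrite eulerS rpredM ?rpredN ?half_p_integral // rpred_sum // => k _.
by rewrite rpredM ?rpred_nat ?IHn.
Qed.

Lemma binomial_prime_congr p k : prime p -> (k < p)%N ->
  rat_congr p 'C(p, k)%:R (k == 0%N)%:R.
Proof.
move=> p_prime lt_kp; case: (posnP k) => [-> | k_gt0].
  by rewrite bin0; exact: rat_congr_refl.
by apply/rat_congr_dvdn/prime_dvd_bin; rewrite ?k_gt0.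
Qed.

Lemma binomial_pred_prime_congr p k : prime p -> (k < p)%N ->
  rat_congr p ((-1) ^+ k * 'C(p.-1, k)%:R) 1.
Proof.
case: p => // q q_prime; elim: k => [|k IHk] lt_kp.
  by rewrite expr0 bin0 mul1r; exact: rat_congr_refl.
have -> : (-1) ^+ k.+1 * 'C(q, k.+1)%:R
    = (-1) ^+ k.+1 * 'C(q.+1, k.+1)%:R + (-1) ^+ k * 'C(q, k)%:R :> rat.
  by rewrite binS natrD exprS; ring.
rewrite -[1]add0r; apply: rat_congrD; last exact: IHk (ltnW lt_kp).
rewrite -[X in rat_congr _ _ X](mulr0 ((-1) ^+ k.+1)).
by apply: rat_congrMl; [rewrite rpredX ?rpredN ?rpred1 | exact: binomial_prime_congr].
Qed.

Lemma sum_euler_prime_congr p : prime p -> odd p ->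
  rat_congr p (\sum_(k < p) euler k) 2.
Proof.
case: p => // q q_prime /= q_even.
have q_gt0 : (0 < q)%N by have := prime_gt1 q_prime.
have euler_q : euler q = 0.
  have := euler_sign q; rewrite -signr_odd (negPf q_even) (gtn_eqF q_gt0) /=; lra.
apply: rat_congr_trans
  (_ : rat_congr _ _ (\sum_(k < q.+1) (-1) ^+ k * 'C(q, k)%:R * euler k)) _.
  apply: rat_congr_sum => k _; rewrite -[X in rat_congr _ X _]mul1r.
  apply: rat_congrMr; first exact: euler_p_integral.
  exact/rat_congr_sym/binomial_pred_prime_congr.
by rewrite sum_alt_binomial_euler euler_q mulr0 subr0; exact: rat_congr_refl.
Qed.

Lemma euler_prime_congr p : prime p -> odd p ->
  rat_congr p (euler p) (- (1 / 2)).
Proof.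
case: p => // q q_prime q_odd.
rewrite eulerS -[X in rat_congr _ _ X]mulr1.
apply: rat_congrMl; first by rewrite rpredN half_p_integral.
apply: rat_congr_trans
  (_ : rat_congr _ _ (\sum_(k < q.+1) (k == 0%N :> nat)%:R * euler k)) _.
  apply: rat_congr_sum => k _; apply: rat_congrMr; first exact: euler_p_integral.
  exact: binomial_prime_congr.
rewrite big_ord_recl big1 => [|k _]; last by rewrite mul0r.
by rewrite mul1r euler0 addr0; exact: rat_congr_refl.
Qed.

Theorem corollary4 (p : nat) (hp : prime p) (hodd : odd p) :
  rat_congr p (\sum_(0 <= j < p.+1) euler j) (3%:R / 2%:R).
Proof.
rewrite big_mkord big_ord_recr /=.
have -> : 3%:R / 2%:R = 2 + - (1 / 2) :> rat by [].
by apply: rat_congrD; [exact: sum_euler_prime_congr | exact: euler_prime_congr].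
Qed.
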